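(* Let $A\in\mathbb{R}^{N\times N}$, $b^{ex},e\in\mathbb{R}^N$ with $e\neq 0$, and $b=b^{ex}+e$. For each $m$ let $r_m^{ex}=p_m^{ex}(A)b^{ex}$ be the $m$-th residual of GMRES applied to $Ax=b^{ex}$, where $p_m^{ex}$ is the corresponding GMRES residual polynomial (of degree at most $m$, with $p_m^{ex}(0)=1$). Assume there exist $m^*$ and $\eta^*$ such that $\|p_m^{ex}(A)\|\le\eta^*$ for all $m\ge m^*$. Then for every $m\ge m^*$ the $m$-th residual $r_m$ of GMRES applied to $Ax=b$ satisfies \[ \|r_m\|\le\eta\|e\|,\qquad \eta=\frac{\|r_{m^*}^{ex}\|}{\|e\|}+\eta^*. \]
   Context: GMRES with zero initial guess applied to $Ax=b$: the $m$-th iterate $x_m\in\mathcal{K}_m(A,b)=\mathrm{span}\{b,Ab,\dots,A^{m-1}b\}$ minimizes $\|b-Ax\|$ over this subspace, so $r_m=b-Ax_m=p_m(A)b$ with $\|r_m\|=\min\{\|p(A)b\|: p \text{ polynomial of degree}\le m,\ p(0)=1\}$. Norms are Euclidean (spectral for matrices). *)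

From HB Require Import structures.
From mathcomp Require Import all_boot all_order all_algebra.
From mathcomp Require Import classical_sets reals.
Set Implicit Arguments. Unset Strict Implicit. Unset Printing Implicit Defensive.
Import Order.TTheory GRing.Theory Num.Theory.
Local Open Scope ring_scope.
Local Open Scope classical_set_scope.

Definition vnorm {R : realType} {N : nat} (x : 'cV[R]_N) : R :=
  Num.sqrt (\sum_(i < N) x i ord0 ^+ 2).

Definition specnorm {R : realType} {N : nat} (A : 'M[R]_N) : R :=
  sup [set vnorm (A *m x) | x in [set x : 'cV[R]_N | vnorm x = 1]].

Definition poly_mx {R : realType} {N : nat} (A : 'M[R]_N) (p : {poly R}) : 'M[R]_N :=
  \sum_(i < size p) p`_i *: A ^+ i.

(* p is an m-th GMRES residual polynomial for A x = b (zero initial guess):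
   deg p <= m, p(0) = 1, and ||p(A) b|| is minimal among such polynomials,
   so that r_m = p(A) b is the m-th GMRES residual. *)
Definition gmres_poly {R : realType} {N : nat} (A : 'M[R]_N) (b : 'cV[R]_N)
    (m : nat) (p : {poly R}) : Prop :=
  [/\ (size p <= m.+1)%N, p.[0] = 1 &
      forall q : {poly R}, (size q <= m.+1)%N -> q.[0] = 1 ->
        vnorm (poly_mx A p *m b) <= vnorm (poly_mx A q *m b)].

From HB Require Import structures.
From mathcomp Require Import all_boot all_order all_algebra.
From mathcomp Require Import classical_sets reals.
From mathcomp Require Import ring lra.
Set Implicit Arguments. Unset Strict Implicit. Unset Printing Implicit Defensive.
Import Order.TTheory GRing.Theory Num.Theory.
Local Open Scope ring_scope.

(* For m >= m*, the exact polynomial p_m^ex is admissible for the perturbed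
   problem, so ||r_m|| <= ||p_m^ex(A) b^ex|| + ||p_m^ex(A) e||.  The first term
   is the exact residual, which is nonincreasing in m and hence bounded by
   ||r_{m*}^ex||; the second is at most eta* ||e||. *)

Section EuclideanNorm.
Variables (R : realType) (N : nat).
Implicit Types x y : 'cV[R]_N.

Definition vdot x y : R := \sum_(i < N) x i ord0 * y i ord0.

Lemma vnorm_ge0 x : 0 <= vnorm x.
Proof. exact: sqrtr_ge0. Qed.

Lemma vnorm_sqr x : vnorm x ^+ 2 = \sum_(i < N) x i ord0 ^+ 2.
Proof. by rewrite sqr_sqrtr // sumr_ge0 // => i _; rewrite sqr_ge0. Qed.

Lemma sqr_coord_le_vnorm x i : x i ord0 ^+ 2 <= vnorm x ^+ 2.
Proof. by rewrite vnorm_sqr (bigD1 i) //= lerDl sumr_ge0 // => j _; rewrite sqr_ge0. Qed.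

Lemma norm_coord_le_vnorm x i : `|x i ord0| <= vnorm x.
Proof. by rewrite -ler_sqr ?nnegrE ?vnorm_ge0 // real_normK ?num_real ?sqr_coord_le_vnorm. Qed.

Lemma vnorm_eq0 x : (vnorm x == 0) = (x == 0).
Proof.
apply/eqP/eqP => [x0|->]; last first.
  by rewrite /vnorm big1 ?sqrtr0 // => i _; rewrite mxE expr0n.
apply/matrixP => i j; apply/eqP; rewrite (ord1 j) mxE -normr_eq0 eq_le normr_ge0 andbT.
by rewrite -x0 norm_coord_le_vnorm.
Qed.

Lemma vnorm_gt0 x : (0 < vnorm x) = (x != 0).
Proof. by rewrite lt_def vnorm_eq0 vnorm_ge0 andbT. Qed.

Lemma vnorm0 : vnorm (0 : 'cV[R]_N) = 0.
Proof. by apply/eqP; rewrite vnorm_eq0. Qed.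

Lemma vnormZ (c : R) x : vnorm (c *: x) = `|c| * vnorm x.
Proof.
rewrite /vnorm -sqrtr_sqr -sqrtrM ?sqr_ge0 // mulr_sumr.
by congr Num.sqrt; apply: eq_bigr => i _; rewrite mxE exprMn.
Qed.

Lemma vnormD_sqr x y :
  vnorm (x + y) ^+ 2 = vnorm x ^+ 2 + 2 * vdot x y + vnorm y ^+ 2.
Proof.
rewrite !vnorm_sqr /vdot mulr_sumr -!big_split /=.
by apply: eq_bigr => i _; rewrite mxE; ring.
Qed.

Lemma vdot_le_vnorm x y : vdot x y <= vnorm x * vnorm y.
Proof.
have vdot0 z : vdot z 0 = 0 /\ vdot 0 z = 0.
  by split; rewrite /vdot big1 // => i _; rewrite mxE (mulr0, mul0r).
have [->|x0] := eqVneq x 0; first by rewrite (vdot0 y).2 mulr_ge0 ?vnorm_ge0.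
have [->|y0] := eqVneq y 0; first by rewrite (vdot0 x).1 mulr_ge0 ?vnorm_ge0.
have a_gt0 : 0 < vnorm x by rewrite vnorm_gt0.
have b_gt0 : 0 < vnorm y by rewrite vnorm_gt0.
set a := vnorm x in a_gt0 *; set b := vnorm y in b_gt0 *.
(* ||b x - a y||^2 = 2 a b (a b - <x, y>) *)
have : 0 <= \sum_(i < N) (b * x i ord0 - a * y i ord0) ^+ 2.
  by apply: sumr_ge0 => i _; rewrite sqr_ge0.
have -> : \sum_(i < N) (b * x i ord0 - a * y i ord0) ^+ 2 =
    b ^+ 2 * \sum_(i < N) x i ord0 ^+ 2 - 2 * a * b * vdot x y
    + a ^+ 2 * \sum_(i < N) y i ord0 ^+ 2.
  rewrite /vdot !mulr_sumr -sumrB -big_split /=.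
  by apply: eq_bigr => i _; ring.
rewrite -!vnorm_sqr -/a -/b.
have ab_gt0 : 0 < a * b by rewrite mulr_gt0.
by nra.
Qed.

Lemma vnormD_le x y : vnorm (x + y) <= vnorm x + vnorm y.
Proof.
rewrite -ler_sqr ?nnegrE ?addr_ge0 ?vnorm_ge0 // vnormD_sqr.
have := vdot_le_vnorm x y; lra.
Qed.

End EuclideanNorm.

Section SpectralNorm.
Variables (R : realType) (N : nat).
Implicit Types (x u : 'cV[R]_N) (P : 'M[R]_N).

Lemma vnorm_mulmx_unit_le P u : vnorm u = 1 -> vnorm (P *m u) <= specnorm P.
Proof.
(* On the unit sphere |z_j| <= 1, so the absolute row sums of P bound |P z|. *)
move=> u1; apply: sup_upper_bound; last by exists u.
split; first by exists (vnorm (P *m u)), u.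
exists (Num.sqrt (\sum_(i < N) (\sum_(j < N) `|P i j|) ^+ 2)).
move=> _ [z z1 <-]; rewrite ler_sqrt; last by rewrite sumr_ge0 // => i _; rewrite sqr_ge0.
apply: ler_sum => i _.
rewrite -real_normK ?num_real // ler_sqr ?nnegrE ?sumr_ge0 //.
rewrite mxE (le_trans (ler_norm_sum _ _ _)) // ler_sum // => j _.
by rewrite normrM ler_piMr // -z1 norm_coord_le_vnorm.
Qed.

Lemma vnorm_mulmx_le P x : vnorm (P *m x) <= specnorm P * vnorm x.
Proof.
have [->|x0] := eqVneq x 0; first by rewrite mulmx0 vnorm0 mulr0.
have nx_gt0 : 0 < vnorm x by rewrite vnorm_gt0.
set u := (vnorm x)^-1 *: x.
have u1 : vnorm u = 1.
  by rewrite vnormZ ger0_norm ?invr_ge0 ?vnorm_ge0 // mulVf // gt_eqF.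
have -> : P *m x = vnorm x *: (P *m u).
  by rewrite -scalemxAr scalerA mulfV ?gt_eqF // scale1r.
by rewrite vnormZ ger0_norm ?vnorm_ge0 // mulrC ler_pM2r // vnorm_mulmx_unit_le.
Qed.

End SpectralNorm.

Section GmresResidual.
Variables (R : realType) (N : nat).
Implicit Types (b e : 'cV[R]_N) (A : 'M[R]_N) (p q : {poly R}).

Lemma gmres_residual_nonincreasing A b m n p q :
  (m <= n)%N -> gmres_poly A b m p -> gmres_poly A b n q ->
  vnorm (poly_mx A q *m b) <= vnorm (poly_mx A p *m b).
Proof. by move=> mn [sp p0 _] [_ _ qmin]; apply: qmin; rewrite // (leq_trans sp). Qed.

Lemma gmres_residual_perturbed_le A b e m p q :
  gmres_poly A (b + e) m p -> gmres_poly A b m q ->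
  vnorm (poly_mx A p *m (b + e)) <=
    vnorm (poly_mx A q *m b) + specnorm (poly_mx A q) * vnorm e.
Proof.
move=> [_ _ pmin] [sq q0 _]; apply: le_trans (pmin q sq q0) _.
by rewrite mulmxDr (le_trans (vnormD_le _ _)) // lerD2l vnorm_mulmx_le.
Qed.

End GmresResidual.

Theorem proposition1 (R : realType) (N : nat) (A : 'M[R]_N)
    (bex e : 'cV[R]_N) (pex : nat -> {poly R}) (mstar : nat) (etastar : R) :
  e != 0 ->
  (forall m, gmres_poly A bex m (pex m)) ->
  (forall m, (mstar <= m)%N -> specnorm (poly_mx A (pex m)) <= etastar) ->
  forall m, (mstar <= m)%N ->
  forall p : {poly R}, gmres_poly A (bex + e) m p ->
  vnorm (poly_mx A p *m (bex + e)) <=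
    (vnorm (poly_mx A (pex mstar) *m bex) / vnorm e + etastar) * vnorm e.
Proof.
move=> e0 gmres_ex specnorm_ex m mstar_le_m p gmres_p.
have e_gt0 : 0 < vnorm e by rewrite vnorm_gt0.
rewrite mulrDl divfK ?gt_eqF //.
apply: le_trans (gmres_residual_perturbed_le gmres_p (gmres_ex m)) _.
apply: lerD; first exact: gmres_residual_nonincreasing (gmres_ex mstar) (gmres_ex m).
by rewrite ler_pM2r // specnorm_ex.
Qed.
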